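(* Let $K=\{x\in\mathbb R^n: g_1(x)=\dots=g_m(x)=0,\ p_1(x)\ge0,\dots,p_t(x)\ge0\}$ be nonempty, with $g_i,p_j$ real polynomials, and let $d\ge1$. (i) If $K$ is compact, then for $f\in\mathbb R[x]_{\le d}$: $\delta_K(f)>0\iff f\in\operatorname{int}P_d(K)$, and $\delta_K(f)=0\iff f\in\partial P_d(K)$. (ii) If $K^h$ is closed at $\infty$, then for $f\in\mathbb R[x]_{\le d}$: $\delta^h_K(f)>0\iff f\in\operatorname{int}P_d(K)$, and $\delta^h_K(f)=0\iff f\in\partial P_d(K)$.
   Context: $\mathbb R[x]_{\le d}$: real polynomials in $x=(x_1,\dots,x_n)$ of degree $\le d$, with Euclidean topology on coefficients. $P_d(K)=\{f\in\mathbb R[x]_{\le d}: f(x)\ge0\ \forall x\in K\}$. With $\tilde x=(x_0,\dots,x_n)$: $f^h(\tilde x)=x_0^df(x/x_0)$ for $f\in\mathbb R[x]_{\le d}$, and each $g_i^h$, $p_j^h$ is the homogenization of $g_i$, $p_j$ in its own degree ($q^h=x_0^{\deg q}q(x/x_0)$). $K^h=\{\tilde x\in\mathbb R^{n+1}: g_i^h(\tilde x)=0\ \forall i,\ p_j^h(\tilde x)\ge0\ \forall j\}$ (depending on the chosen defining polynomials); $K^h$ is closed at $\infty$ if $K^h\cap\{x_0\ge0\}$ equals the closure of $K^h\cap\{x_0>0\}$. $\delta_K(f)=\min_{x\in K}f(x)$ and $\delta^h_K(f)=\min\{f^h(\tilde x):\tilde x\in K^h,\ \|\tilde x\|_2=1,\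 x_0\ge0\}$. *)

From Stdlib Require Import Reals.
From HB Require Import structures.
From mathcomp Require Import all_boot.
Local Open Scope R_scope.

Set Implicit Arguments.
Unset Strict Implicit.
Unset Printing Implicit Defensive.

Definition mono (n D : nat) :=
  {a : {ffun 'I_n -> 'I_D.+1} | (\sum_(i < n) (a i : nat) <= D)%N}.

Definition deg_of (n D : nat) (a : mono n D) : nat := (\sum_(i < n) (val a i : nat))%N.

Definition monomial (n D : nat) (x : 'I_n -> R) (a : mono n D) : R :=
  \big[Rmult/1]_(i : 'I_n) (pow (x i) (val a i : nat)).

(* A polynomial of degree <= D is its coefficient vector (mono n D -> R);
   R[x]_{<=d} is thus identified with R^{mono n d}, with Euclidean topology. *)
Definition peval (n D : nat) (f : mono n D -> R) (x : 'I_n -> R) : R :=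
  \big[Rplus/0]_(a : mono n D) (f a * monomial x a).

(* Homogenization in degree e, evaluated at xt = (x_0, x_1, ..., x_n):
   sum_alpha f_alpha x_0^(e - |alpha|) x^alpha  (= x_0^e f(x/x_0)). *)
Definition hom_eval (n D : nat) (e : nat) (f : mono n D -> R) (xt : 'I_n.+1 -> R) : R :=
  \big[Rplus/0]_(a : mono n D)
     (f a * pow (xt ord0) (e - deg_of a) * monomial (fun i => xt (lift ord0 i)) a).

Record rpoly (n : nat) := RPoly { rbound : nat; rcoef : mono n rbound -> R }.

Definition rp_eval (n : nat) (q : rpoly n) (x : 'I_n -> R) : R := peval (@rcoef n q) x.

(* The actual degree of q (max |alpha| over nonzero coefficients; 0 for q = 0). *)
Definition rdeg (n : nat) (q : rpoly n) : nat :=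
  (\max_(a : mono n (rbound q) | if Req_EM_T (@rcoef n q a) 0 then false else true)
      deg_of a)%N.

Definition rp_hom (n : nat) (q : rpoly n) (xt : 'I_n.+1 -> R) : R :=
  hom_eval (rdeg q) (@rcoef n q) xt.

Definition Kset (n m t : nat) (g : 'I_m -> rpoly n) (p : 'I_t -> rpoly n)
  (x : 'I_n -> R) : Prop :=
  (forall i, rp_eval (g i) x = 0) /\ (forall j, (rp_eval (p j) x >= 0)).

Definition Khset (n m t : nat) (g : 'I_m -> rpoly n) (p : 'I_t -> rpoly n)
  (xt : 'I_n.+1 -> R) : Prop :=
  (forall i, rp_hom (g i) xt = 0) /\ (forall j, (rp_hom (p j) xt >= 0)).

Definition Pd (n m t d : nat) (g : 'I_m -> rpoly n) (p : 'I_t -> rpoly n)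
  (f : mono n d -> R) : Prop :=
  forall x, Kset g p x -> (peval f x >= 0).

Definition dist2 (T : finType) (u v : T -> R) : R :=
  \big[Rplus/0]_(i : T) (pow (u i - v i) 2).

Definition interiorR (T : finType) (S : (T -> R) -> Prop) (f : T -> R) : Prop :=
  exists eps, (eps > 0) /\ forall h, (dist2 h f < pow eps 2) -> S h.

Definition closureR (T : finType) (S : (T -> R) -> Prop) (f : T -> R) : Prop :=
  forall eps, (eps > 0) -> exists h, S h /\ (dist2 h f < pow eps 2).

Definition boundaryR (T : finType) (S : (T -> R) -> Prop) (f : T -> R) : Prop :=
  closureR S f /\ ~ interiorR S f.

Definition closed_set (T : finType) (S : (T -> R) -> Prop) : Prop :=
  forall x, closureR S x -> S x.

Definition bounded_set (T : finType) (S : (T -> R) -> Prop) : Prop :=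
  exists M, forall x, S x -> (dist2 x (fun _ => 0) <= M).

(* compactness in R^n (Heine-Borel: closed and bounded) *)
Definition compact_set (T : finType) (S : (T -> R) -> Prop) : Prop :=
  closed_set S /\ bounded_set S.

Definition is_min (A : Type) (S : A -> Prop) (F : A -> R) (mn : R) : Prop :=
  (exists x, S x /\ F x = mn) /\ (forall x, S x -> (mn <= F x)).

Definition closed_at_infty (n m t : nat) (g : 'I_m -> rpoly n) (p : 'I_t -> rpoly n)
  : Prop :=
  forall xt, (Khset g p xt /\ (xt ord0 >= 0)) <->
             closureR (fun y => Khset g p y /\ (y ord0 > 0)) xt.

(* Domain of delta^h: K^h ∩ unit sphere ∩ {x0 >= 0} *)
Definition Khsphere (n m t : nat) (g : 'I_m -> rpoly n) (p : 'I_t -> rpoly n)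
  (xt : 'I_n.+1 -> R) : Prop :=
  Khset g p xt /\ dist2 xt (fun _ => 0) = 1 /\ (xt ord0 >= 0).

(* Both parts follow from one principle. Let S be a nonempty compact set and
   F(f, z) a jointly continuous function, linear in the coefficient vector f,
   such that f lies in P_d(K) iff F(f, .) >= 0 on S, and such that for no z in S
   does F(., z) vanish identically. Then mn = min_S F(f, .) exists. If mn > 0,
   compactness keeps F(h, .) > 0 on S for all h near f; if mn = F(f, z) = 0,
   moving f slightly along a coefficient on which F(., z) does not vanish makes
   F(., z) negative and so leaves P_d(K). Since P_d(K) is closed, mn = 0 then
   characterizes its boundary.
   For (i) take S = K and F(f, x) = f(x). For (ii) take S = K^h on the unit
   sphere with x_0 >= 0 and F = f^h: a point x of K, rescaled to c (1, x),
   lies in S with f^h(c (1, x)) = c^d f(x), and since K^h is closed at infinity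
   every point of S is a limit of such rescaled points. *)

Set Warnings "-notation-overridden -redundant-canonical-projection".
From Stdlib Require Import Reals Lra Lia Psatz ClassicalEpsilon Classical FunctionalExtensionality.
From HB Require Import structures.
From mathcomp Require Import all_boot.
Local Open Scope R_scope.

Set Implicit Arguments.
Unset Strict Implicit.

HB.instance Definition _ := Monoid.isComLaw.Build R 0 Rplus
  (fun x y z => esym (Rplus_assoc x y z)) Rplus_comm Rplus_0_l.
HB.instance Definition _ := Monoid.isComLaw.Build R 1 Rmult
  (fun x y z => esym (Rmult_assoc x y z)) Rmult_comm Rmult_1_l.

(** * Convergent sequences in finite-dimensional space *)

Lemma cv_const (c : R) : Un_cv (fun _ => c) c.
Proof.
move=> e He; exists 0%nat => k _; rewrite /R_dist Rminus_diag Rabs_R0; lra.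
Qed.

Lemma cv_ext (u v : nat -> R) l : (forall k, u k = v k) -> Un_cv u l -> Un_cv v l.
Proof. by move=> E H e /H [N HN]; exists N => k /HN; rewrite E. Qed.

Lemma cv_big (op : R -> R -> R) (idx : R) (I : Type) (s : seq I) (P : pred I)
    (F : nat -> I -> R) (G : I -> R) :
  (forall u v a b, Un_cv u a -> Un_cv v b -> Un_cv (fun k => op (u k) (v k)) (op a b)) ->
  (forall i, Un_cv (fun k => F k i) (G i)) ->
  Un_cv (fun k => \big[op/idx]_(i <- s | P i) F k i) (\big[op/idx]_(i <- s | P i) G i).
Proof.
move=> Hop HF; rewrite unlock; elim: s => [|i s IH] /=; first exact: cv_const.
by case: (P i) => //; apply: Hop.
Qed.

Lemma cv_pow (u : nat -> R) l e : Un_cv u l -> Un_cv (fun k => u k ^ e) (l ^ e).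
Proof. by move=> H; elim: e => [|e IH] /=; [exact: cv_const | exact: CV_mult]. Qed.

Definition Un_cv_pw {T : Type} (y : nat -> T -> R) (x : T -> R) : Prop :=
  forall i, Un_cv (fun k => y k i) (x i).

Lemma cv_subseq (u : nat -> R) l (psi : nat -> nat) :
  (forall k, (k <= psi k)%coq_nat) -> Un_cv u l -> Un_cv (fun k => u (psi k)) l.
Proof.
move=> Hpsi H e /H [N HN]; exists N => k Hk; apply: HN; have := Hpsi k; lia.
Qed.

Lemma inv_succ_pos k : 0 < / (INR k + 1).
Proof. apply: Rinv_0_lt_compat; have := pos_INR k; lra. Qed.

Lemma inv_succ_lt eps : 0 < eps -> exists N, forall k, (N <= k)%coq_nat -> / (INR k + 1) < eps.
Proof.
move=> He; have [N [HN N_gt0]] := archimed_cor1 eps He; exists N => k Hk.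
apply: Rle_lt_trans HN; apply: Rinv_le_contravar; first exact: lt_0_INR.
have := le_INR _ _ Hk; lra.
Qed.

Lemma cv_inv_succ (u : nat -> R) l :
  (forall k, Rabs (u k - l) < / (INR k + 1)) -> Un_cv u l.
Proof.
move=> H e /inv_succ_lt [N HN]; exists N => k Hk.
apply: Rlt_trans (H k) _; apply: HN; lia.
Qed.

Lemma bounded_cv_subseq (u : nat -> R) M : (forall k, Rabs (u k) <= M) ->
  exists psi : nat -> nat, exists l,
    (forall k, (k <= psi k)%coq_nat) /\ Un_cv (fun k => u (psi k)) l.
Proof.
move=> HM.
have [l Hl] : exists l, ValAdh u l.
  apply: (Bolzano_Weierstrass u (fun c => -M <= c <= M) (compact_P3 (-M) M)) => k.
  by have := HM k; rewrite /Rabs; case: Rcase_abs; lra.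
have near_l (Nk : nat * nat) :
    exists q, (Nk.1 <= q)%coq_nat /\ Rabs (u q - l) < / (INR Nk.2 + 1).
  have ball_l : neighbourhood (fun y => Rabs (y - l) < / (INR Nk.2 + 1)) l.
    by exists (mkposreal _ (inv_succ_pos Nk.2)) => y; rewrite /disc.
  have [q [Hq Vq]] := Hl _ Nk.1 ball_l.
  by exists q.
have [sel Hsel] := ClassicalEpsilon.choice _ near_l.
(* The k-th index is chosen beyond the previous one, within 1/(k+1) of l. *)
pose fix psi k := if k is k'.+1 then sel ((psi k').+1, k) else sel (0, 0)%nat.
exists psi, l; split.
- elim=> [|k IH] /=; first lia.
  have := (Hsel ((psi k).+1, k.+1)).1 => /=; lia.
- by apply: cv_inv_succ; case=> [|k]; [exact: (Hsel (0, 0)%nat).2 | exact: (Hsel _).2].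
Qed.

Lemma bounded_cv_subseq_pw (T : finType) (y : nat -> T -> R) M :
  (forall k i, Rabs (y k i) <= M) ->
  exists psi : nat -> nat, exists x : T -> R,
    (forall k, (k <= psi k)%coq_nat) /\ Un_cv_pw (fun k => y (psi k)) x.
Proof.
move=> HM.
suff [psi [x [Hpsi Hx]]] : exists psi x, (forall k, (k <= psi k)%coq_nat) /\
    forall i, i \in enum T -> Un_cv (fun k => y (psi k) i) (x i).
  by exists psi, x; split=> // i; apply: Hx; rewrite mem_enum.
elim: (enum T) => [|j s [psi [x [Hpsi Hx]]]].
  by exists id, (fun _ => 0); split => // k; lia.
have [phi [l [Hphi Hl]]] := @bounded_cv_subseq (fun k => y (psi k) j) M (fun k => HM _ j).
exists (fun k => psi (phi k)), (fun i => if i == j then l else x i); split.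
  by move=> k; have := Hphi k; have := Hpsi (phi k); lia.
move=> i; rewrite in_cons; case: eqP => [-> _ //|_ /= /Hx].
exact: (@cv_subseq (fun k => y (psi k) i)).
Qed.

Lemma cv_pw_subseq (T : Type) (y : nat -> T -> R) x (psi : nat -> nat) :
  (forall k, (k <= psi k)%coq_nat) -> Un_cv_pw y x -> Un_cv_pw (fun k => y (psi k)) x.
Proof. by move=> Hpsi Hy i; apply: (@cv_subseq (fun k => y k i)). Qed.

Lemma cv_eventually_lt (u : nat -> R) l e : Un_cv u l -> l < e -> exists k, u k < e.
Proof.
move=> H Hl; have [|N HN] := H (e - l); first lra.
by exists N; have := HN N (le_n _); rewrite /R_dist => /Rabs_def2; lra.
Qed.

Lemma exists_nat_gt A : exists N : nat, A < INR N.
Proof.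
have Hp : 0 < / (Rabs A + 1) by apply: Rinv_0_lt_compat; have := Rabs_pos A; lra.
have [N [HN N_gt0]] := archimed_cor1 _ Hp; exists N.
have HI : 0 < INR N by apply: lt_0_INR.
suff : Rabs A + 1 < INR N by have := Rle_abs A; lra.
by apply: Rnot_le_lt => /(Rinv_le_contravar _ _ HI); lra.
Qed.

Lemma big_Rplus_ge0 (I : Type) (s : seq I) (P : pred I) (F : I -> R) :
  (forall i, P i -> 0 <= F i) -> 0 <= \big[Rplus/0]_(i <- s | P i) F i.
Proof. by move=> H; apply: (big_ind (fun x => 0 <= x)) => [|x y|]; [lra | lra | ]. Qed.

Lemma dist2_coord (T : finType) (u v : T -> R) i : (u i - v i) ^ 2 <= dist2 u v.
Proof.
rewrite /dist2 (bigD1 i) // -[X in X <= _]Rplus_0_r; apply: Rplus_le_compat_l.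
by apply: big_Rplus_ge0 => j _; apply: pow2_ge_0.
Qed.

Lemma dist2_refl (T : finType) (u : T -> R) : dist2 u u = 0.
Proof. by rewrite /dist2 big1 // => i _; ring. Qed.

Lemma big_Rmult_distr (I : Type) (s : seq I) (P : pred I) (c : R) (F : I -> R) :
  c * \big[Rplus/0]_(i <- s | P i) F i = \big[Rplus/0]_(i <- s | P i) (c * F i).
Proof.
elim: s => [|i s IH]; first by rewrite !big_nil; ring.
by rewrite !big_cons; case: (P i) => //; rewrite -IH; ring.
Qed.

Lemma dist2_scale0 (T : finType) c (u : T -> R) :
  dist2 (fun j => c * u j) (fun _ => 0) = c ^ 2 * dist2 u (fun _ => 0).
Proof. by rewrite /dist2 big_Rmult_distr; apply: eq_bigr => i _; ring. Qed.

Lemma cv_dist2 (T : finType) (y : nat -> T -> R) (x v : T -> R) :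
  Un_cv_pw y x -> Un_cv (fun k => dist2 (y k) v) (dist2 x v).
Proof.
move=> Hy; apply: cv_big => [u w a b|i]; first exact: CV_plus.
by apply: cv_pow; apply: CV_minus => //; apply: cv_const.
Qed.

Lemma dist2_inv_succ_cv (T : finType) (y : nat -> T -> R) (x : T -> R) :
  (forall k, dist2 (y k) x < (/ (INR k + 1)) ^ 2) -> Un_cv_pw y x.
Proof.
move=> Hy i; apply: cv_inv_succ => k.
have Hk := inv_succ_pos k; have := dist2_coord (y k) x i; have := Hy k.
by rewrite /Rabs; case: Rcase_abs => _; nra.
Qed.

Lemma closureR_cv_seq (T : finType) (S : (T -> R) -> Prop) x :
  closureR S x -> exists y : nat -> T -> R, (forall k, S (y k)) /\ Un_cv_pw y x.
Proof.
move=> Hx; have [y Hy] := ClassicalEpsilon.choice _ (fun k => Hx _ (inv_succ_pos k)).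
by exists y; split=> [k|]; [exact: (Hy k).1 | apply: dist2_inv_succ_cv => k; exact: (Hy k).2].
Qed.

Lemma cv_seq_closureR (T : finType) (S : (T -> R) -> Prop) (y : nat -> T -> R) x :
  (forall k, S (y k)) -> Un_cv_pw y x -> closureR S x.
Proof.
move=> HS Hy e He; have := cv_dist2 x Hy; rewrite dist2_refl => Hd.
by have [k Hk] := cv_eventually_lt Hd (pow_lt _ 2 He); exists (y k).
Qed.

Lemma not_interiorR_closureR (T : finType) (S : (T -> R) -> Prop) f :
  ~ interiorR S f -> closureR (fun h => ~ S h) f.
Proof.
move=> Hf e He; apply: NNPP => Hn; apply: Hf; exists e; split => // h Hh.
by apply: NNPP => Sh; apply: Hn; exists h.
Qed.

Lemma interiorR_sub (T : finType) (S : (T -> R) -> Prop) f : interiorR S f -> S f.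
Proof. by move=> [e [He Hf]]; apply: Hf; rewrite dist2_refl; apply: pow_lt. Qed.

Lemma compact_cv_subseq (T : finType) (S : (T -> R) -> Prop) (y : nat -> T -> R) :
  compact_set S -> (forall k, S (y k)) ->
  exists psi x, (forall k, (k <= psi k)%coq_nat) /\ S x /\ Un_cv_pw (fun k => y (psi k)) x.
Proof.
move=> [S_closed [M HM]] HS.
have y_bounded k i : Rabs (y k i) <= 1 + M.
  have := dist2_coord (y k) (fun _ => 0) i; have := HM _ (HS k).
  by rewrite Rminus_0_r /Rabs; case: Rcase_abs => _; nra.
have [psi [x [Hpsi Hx]]] := bounded_cv_subseq_pw y_bounded.
exists psi, x; do 2!split => //.
by apply: S_closed; apply: (cv_seq_closureR (fun k => HS (psi k)) Hx).
Qed.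

(** * Minima of continuous functions on compact sets *)

Section ExtremeValue.
Variables (T : finType) (S : (T -> R) -> Prop) (F : (T -> R) -> R).
Hypotheses (S_compact : compact_set S) (S_nonempty : exists x, S x).
Hypothesis F_cont : forall y x, (forall k, S (y k)) -> S x -> Un_cv_pw y x ->
  Un_cv (fun k => F (y k)) (F x).

Lemma compact_cont_cv_subseq (y : nat -> T -> R) : (forall k, S (y k)) ->
  exists psi x, (forall k, (k <= psi k)%coq_nat) /\ S x /\
    Un_cv (fun k => F (y (psi k))) (F x).
Proof.
move=> Sy; have [psi [x [Hpsi [Sx Hx]]]] := compact_cv_subseq S_compact Sy.
by exists psi, x; do 2!split => //; apply: F_cont.
Qed.

Lemma compact_cont_lb : exists B, forall x, S x -> B <= F x.
Proof.
apply: NNPP => no_lb.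
have [y Hy] : exists y : nat -> T -> R, forall k, S (y k) /\ F (y k) < - INR k.
  apply: (ClassicalEpsilon.choice (fun k x => S x /\ F x < - INR k)) => k.
  apply: NNPP => Hk; apply: no_lb.
  exists (- INR k) => x Sx; apply: Rnot_lt_le => Hlt; apply: Hk; by exists x.
have [psi [x [Hpsi [_ Hx]]]] := compact_cont_cv_subseq (fun k => (Hy k).1).
have [N HN] := Hx 1 Rlt_0_1.
have [M HM] := exists_nat_gt (1 - F x).
have := HN (N + M)%coq_nat ltac:(lia); rewrite /R_dist => /Rabs_def2.
have := (Hy (psi (N + M)%coq_nat)).2.
have := le_INR _ _ (Hpsi (N + M)%coq_nat); have := le_INR M (N + M)%coq_nat ltac:(lia).
lra.
Qed.

Lemma compact_cont_attains_min : exists mn, is_min S F mn.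
Proof.
have [B HB] := compact_cont_lb; have [x0 Sx0] := S_nonempty.
pose E r := exists x, S x /\ r = - F x.
have E_bound : bound E by exists (- B) => r [x [Sx ->]]; have := HB x Sx; lra.
have [L [L_ub L_least]] := completeness E E_bound (ex_intro _ _ (ex_intro _ x0 (conj Sx0 erefl))).
have L_lb x : S x -> - L <= F x.
  by move=> Sx; have := L_ub _ (ex_intro _ x (conj Sx erefl)); lra.
have [y Hy] : exists y : nat -> T -> R, forall k, S (y k) /\ F (y k) < - L + / (INR k + 1).
  apply: (ClassicalEpsilon.choice (fun k x => S x /\ F x < - L + / (INR k + 1))) => k.
  apply: NNPP => Hk.
  suff : L <= L - / (INR k + 1) by have := inv_succ_pos k; lra.
  apply: L_least => r [x [Sx ->]]; apply: Rnot_lt_le => Hlt; apply: Hk.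
  by exists x; split => //; lra.
have [psi [x [Hpsi [Sx Hx]]]] := compact_cont_cv_subseq (fun k => (Hy k).1).
exists (F x); split => [|z Sz]; first by exists x.
suff : F x <= - L by have := L_lb z Sz; lra.
have bound_cv : Un_cv (fun k => - L + / (INR (psi k) + 1)) (- L + 0).
  by apply: CV_plus; [exact: cv_const | exact: (cv_subseq Hpsi RinvN_cv)].
rewrite -[- L]Rplus_0_r.
exact: (Rle_cv_lim (fun k => Rlt_le _ _ (Hy (psi k)).2) Hx bound_cv).
Qed.

End ExtremeValue.

Lemma cv_pw_const (T : Type) (x : T -> R) : Un_cv_pw (fun _ => x) x.
Proof. by move=> i; apply: cv_const. Qed.

Lemma cv_le0 (u : nat -> R) l : (forall k, u k <= 0) -> Un_cv u l -> l <= 0.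
Proof. by move=> H Hu; apply: (Rle_cv_lim H Hu); apply: cv_const. Qed.

Lemma cv_ge0 (u : nat -> R) l : (forall k, 0 <= u k) -> Un_cv u l -> 0 <= l.
Proof. by move=> H Hu; apply: (Rle_cv_lim H _ Hu); apply: cv_const. Qed.

Definition coord_vec (T : finType) (a : T) : T -> R := fun b => if b == a then 1 else 0.

Lemma big_coord_vec (T : finType) (a : T) (G : T -> R) :
  \big[Rplus/0]_(b : T) (coord_vec a b * G b) = G a.
Proof.
rewrite (bigD1 a) //= big1 /coord_vec ?eqxx; first ring.
by move=> b /negbTE ->; ring.
Qed.

Lemma dist2_add_coord_vec (T : finType) (h : T -> R) r (a : T) :
  dist2 (fun b => h b + r * coord_vec a b) h = r ^ 2.
Proof.
rewrite /dist2 -(big_coord_vec a (fun _ => r ^ 2)).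
by apply: eq_bigr => b _; rewrite /coord_vec; case: (b == a); ring.
Qed.

Section MinCharacterization.
Variables (A B : finType) (C : (A -> R) -> Prop) (S : (B -> R) -> Prop)
  (F : (A -> R) -> (B -> R) -> R).
Hypotheses (S_compact : compact_set S) (S_nonempty : exists z, S z).
Hypothesis F_cont : forall h hk z zk, Un_cv_pw hk h -> Un_cv_pw zk z ->
  Un_cv (fun k => F (hk k) (zk k)) (F h z).
Hypothesis F_linear : forall h u r z, F (fun a => h a + r * u a) z = F h z + r * F u z.
Hypothesis F_nondegenerate : forall z, S z -> exists a, F (coord_vec a) z <> 0.
Hypothesis C_iff_nonneg : forall h, C h <-> forall z, S z -> 0 <= F h z.

Lemma min_exists f : exists mn, is_min S (F f) mn.
Proof.
apply: compact_cont_attains_min => // zk z _ _ Hz.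
exact: (F_cont (cv_pw_const f) Hz).
Qed.

Lemma C_iff_min_ge0 f mn : is_min S (F f) mn -> C f <-> 0 <= mn.
Proof.
move=> [[z0 [Sz0 <-]] Hmin]; rewrite C_iff_nonneg; split; first exact.
by move=> H z Sz; apply: Rle_trans H (Hmin z Sz).
Qed.

Lemma C_closed f : closureR C f -> C f.
Proof.
move=> /closureR_cv_seq [hk [Chk Hhk]]; apply/C_iff_nonneg => z Sz.
apply: (cv_ge0 _ (F_cont Hhk (cv_pw_const z))) => k.
by move/C_iff_nonneg: (Chk k); apply.
Qed.

Lemma not_C_witness h : ~ C h -> exists z, S z /\ F h z < 0.
Proof.
move=> NCh; apply: NNPP => Hn; apply/NCh/C_iff_nonneg => z Sz.
by apply: Rnot_lt_le => Hlt; apply: Hn; exists z.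
Qed.

Lemma min_gt0_interior f mn : is_min S (F f) mn -> mn > 0 -> interiorR C f.
Proof.
move=> [_ Hmin] mn_gt0; apply: NNPP => /not_interiorR_closureR/closureR_cv_seq.
move=> [hk [NChk Hhk]].
have [zk Hzk] := ClassicalEpsilon.choice _ (fun k => not_C_witness (NChk k)).
have [psi [z [Hpsi [Sz Hz]]]] := compact_cv_subseq S_compact (fun k => (Hzk k).1).
have F_cv := F_cont (cv_pw_subseq Hpsi Hhk) Hz.
have := cv_le0 (fun k => Rlt_le _ _ (Hzk (psi k)).2) F_cv.
have := Hmin z Sz; lra.
Qed.

Lemma interior_min_gt0 f mn : is_min S (F f) mn -> interiorR C f -> mn > 0.
Proof.
move=> Hmn Hf; have mn_ge0 := (C_iff_min_ge0 Hmn).1 (interiorR_sub Hf).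
case: Hmn Hf => [[z0 [Sz0 Fz0]] _] [e [e_gt0 He]].
apply: Rnot_le_lt => mn_le0.
have [a Ha] := F_nondegenerate Sz0; set s := F (coord_vec a) z0 in Ha.
have [r [rs_lt0 r_small]] : exists r, r * s < 0 /\ r ^ 2 < e ^ 2.
  by case: (Rlt_dec 0 s) => Hs; [exists (- (e / 2)) | exists (e / 2)]; split; nra.
have := He _ (eq_ind_r (fun x => x < e ^ 2) r_small (dist2_add_coord_vec f r a)).
move/C_iff_nonneg/(_ z0 Sz0); rewrite F_linear Fz0 -/s; lra.
Qed.

Lemma min_eq0_boundary f mn : is_min S (F f) mn -> mn = 0 <-> boundaryR C f.
Proof.
move=> Hmn; have Cf_iff := C_iff_min_ge0 Hmn; split.
- move=> mn0; split=> [e e_gt0|/(interior_min_gt0 Hmn)]; last lra.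
  by exists f; split; [apply/Cf_iff; lra | rewrite dist2_refl; apply: pow_lt].
- move=> [/C_closed/Cf_iff mn_ge0 /(contra_not (min_gt0_interior Hmn))]; lra.
Qed.

Theorem min_characterization f : exists mn, is_min S (F f) mn /\
  (mn > 0 <-> interiorR C f) /\ (mn = 0 <-> boundaryR C f).
Proof.
have [mn Hmn] := min_exists f; exists mn; split => //.
split; [split; [exact: min_gt0_interior | exact: interior_min_gt0] | exact: min_eq0_boundary].
Qed.

End MinCharacterization.

(** * Polynomials and homogenization *)

Section Evaluation.
Variables (n D : nat).
Implicit Types (f u : mono n D -> R) (x : 'I_n -> R) (xt : 'I_n.+1 -> R).

Lemma monomial_cv (xk : nat -> 'I_n -> R) x (a : mono n D) :
  Un_cv_pw xk x -> Un_cv (fun k => monomial (xk k) a) (monomial x a).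
Proof. by move=> Hx; apply: cv_big => [u v l l'|i]; [exact: CV_mult | apply: cv_pow]. Qed.

Lemma peval_cv (fk : nat -> mono n D -> R) f (xk : nat -> 'I_n -> R) x :
  Un_cv_pw fk f -> Un_cv_pw xk x -> Un_cv (fun k => peval (fk k) (xk k)) (peval f x).
Proof.
move=> Hf Hx; apply: cv_big => [u v l l'|a]; first exact: CV_plus.
by apply: CV_mult => //; apply: monomial_cv.
Qed.

Lemma hom_eval_cv e (fk : nat -> mono n D -> R) f (yk : nat -> 'I_n.+1 -> R) y :
  Un_cv_pw fk f -> Un_cv_pw yk y -> Un_cv (fun k => hom_eval e (fk k) (yk k)) (hom_eval e f y).
Proof.
move=> Hf Hy; apply: cv_big => [u v l l'|a]; first exact: CV_plus.
apply: CV_mult; first by apply: CV_mult; [exact: Hf | apply: cv_pow].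
by apply: monomial_cv => i; apply: Hy.
Qed.

Lemma peval_linear f u r x :
  peval (fun a => f a + r * u a) x = peval f x + r * peval u x.
Proof. by rewrite /peval big_Rmult_distr -big_split /=; apply: eq_bigr => a _; ring. Qed.

Lemma hom_eval_linear e f u r xt :
  hom_eval e (fun a => f a + r * u a) xt = hom_eval e f xt + r * hom_eval e u xt.
Proof. by rewrite /hom_eval big_Rmult_distr -big_split /=; apply: eq_bigr => a _; ring. Qed.

Lemma peval_coord_vec (a : mono n D) x : peval (coord_vec a) x = monomial x a.
Proof. exact: big_coord_vec. Qed.

Lemma hom_eval_coord_vec e (a : mono n D) xt :
  hom_eval e (coord_vec a) xt =
  xt ord0 ^ (e - deg_of a) * monomial (fun i => xt (lift ord0 i)) a.
Proof.
rewrite /hom_eval -(big_coord_vec a (fun b : mono n D =>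
  xt ord0 ^ (e - deg_of b) * monomial (fun i => xt (lift ord0 i)) b)).
by apply: eq_bigr => b _; ring.
Qed.

Lemma monomial_scale c x (a : mono n D) :
  monomial (fun i => c * x i) a = c ^ deg_of a * monomial x a.
Proof.
rewrite /monomial /deg_of (big_morph (pow c) (pow_add c) (erefl : c ^ 0 = 1)) -big_split /=.
by apply: eq_bigr => i _; rewrite Rpow_mult_distr.
Qed.

End Evaluation.

Lemma hom_eval_scale n D e (f : mono n D -> R) c (xt : 'I_n.+1 -> R) :
  (forall a, f a <> 0 -> (deg_of a <= e)%N) ->
  hom_eval e f (fun j => c * xt j) = c ^ e * hom_eval e f xt.
Proof.
move=> f_deg; rewrite /hom_eval big_Rmult_distr; apply: eq_bigr => a _.
rewrite monomial_scale Rpow_mult_distr; change (n.+1.-1) with n.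
have [->|/f_deg deg_le] := Req_dec (f a) 0; first ring.
by rewrite -[in c ^ e](subnK deg_le) pow_add; ring.
Qed.

Lemma rdeg_ge n (q : rpoly n) a : @rcoef n q a <> 0 -> (deg_of a <= rdeg q)%N.
Proof.
move=> Ha; apply: (leq_bigmax_cond (F := fun a => deg_of a)).
by case: Req_EM_T.
Qed.

Lemma rp_hom_scale n (q : rpoly n) c xt :
  rp_hom q (fun j => c * xt j) = c ^ rdeg q * rp_hom q xt.
Proof. by apply: hom_eval_scale => a; apply: rdeg_ge. Qed.

Lemma Khset_scale n m t (g : 'I_m -> rpoly n) (p : 'I_t -> rpoly n) c xt :
  0 < c -> Khset g p (fun j => c * xt j) <-> Khset g p xt.
Proof.
move=> c_gt0.
have scale_eq0 q : rp_hom q (fun j => c * xt j) = 0 <-> rp_hom q xt = 0.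
  by rewrite rp_hom_scale; have := pow_lt c (rdeg q) c_gt0; split => Hq; nra.
have scale_ge0 q : rp_hom q (fun j => c * xt j) >= 0 <-> rp_hom q xt >= 0.
  by rewrite rp_hom_scale; have := pow_lt c (rdeg q) c_gt0; split => Hq; nra.
by split=> [] [Hg Hp]; split=> i; by [apply/scale_eq0 | apply/scale_ge0].
Qed.

Section Dehomogenization.
Variables (n m t : nat) (g : 'I_m -> rpoly n) (p : 'I_t -> rpoly n).

Definition cons1 (x : 'I_n -> R) (j : 'I_n.+1) : R :=
  if unlift ord0 j is Some i then x i else 1.

Definition dehom (y : 'I_n.+1 -> R) (i : 'I_n) : R := y (lift ord0 i) / y ord0.

Lemma cons1_0 x : cons1 x ord0 = 1.
Proof. by rewrite /cons1 unlift_none. Qed.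

Lemma cons1_lift x i : cons1 x (lift ord0 i) = x i.
Proof. by rewrite /cons1 liftK. Qed.

Lemma hom_eval_cons1 D e (f : mono n D -> R) x : hom_eval e f (cons1 x) = peval f x.
Proof.
rewrite /hom_eval /peval; apply: eq_bigr => a _; rewrite cons1_0 pow1 Rmult_1_r.
by congr (_ * _); apply: eq_bigr => i _; rewrite cons1_lift.
Qed.

Lemma hom_eval_scale_cons1 d (f : mono n d -> R) c x :
  hom_eval d f (fun j => c * cons1 x j) = c ^ d * peval f x.
Proof. by rewrite hom_eval_scale ?hom_eval_cons1 // => a _; apply: (valP a). Qed.

Lemma rp_hom_cons1 (q : rpoly n) x : rp_hom q (cons1 x) = rp_eval q x.
Proof. exact: hom_eval_cons1. Qed.

Lemma Kset_iff_Khset_cons1 x : Kset g p x <-> Khset g p (cons1 x).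
Proof.
split=> [] [Hg Hp]; split=> i;
  [move: (Hg i) | move: (Hp i) | move: (Hg i) | move: (Hp i)]; by rewrite rp_hom_cons1.
Qed.

Lemma cons1_dehom y : 0 < y ord0 -> y = (fun j => y ord0 * cons1 (dehom y) j).
Proof.
move=> y0_gt0; apply: functional_extensionality => j.
case: (unliftP ord0 j) => [i ->|->]; rewrite ?cons1_lift ?cons1_0 /dehom; last ring.
by field; lra.
Qed.

Lemma Khset_dehom y : Khset g p y -> 0 < y ord0 -> Kset g p (dehom y).
Proof.
move=> Khy y0_gt0; apply/Kset_iff_Khset_cons1/(Khset_scale _ _ _ y0_gt0).
by rewrite -cons1_dehom.
Qed.

Lemma hom_eval_dehom d (f : mono n d -> R) y :
  0 < y ord0 -> hom_eval d f y = y ord0 ^ d * peval f (dehom y).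
Proof. by move=> y0_gt0; rewrite {1}(cons1_dehom y0_gt0) hom_eval_scale_cons1. Qed.

Lemma Khsphere_of_Kset x : Kset g p x -> exists c, 0 < c /\ Khsphere g p (fun j => c * cons1 x j).
Proof.
move=> Kx; set N := dist2 (cons1 x) (fun _ => 0).
have N_ge1 : 1 <= N.
  by have := dist2_coord (cons1 x) (fun _ => 0) ord0; rewrite cons1_0 Rminus_0_r pow1.
have sN_gt0 : 0 < sqrt N by apply: sqrt_lt_R0; lra.
have c_gt0 := Rinv_0_lt_compat _ sN_gt0.
exists (/ sqrt N); split => //; rewrite /Khsphere; split.
  exact/(Khset_scale _ _ _ c_gt0)/Kset_iff_Khset_cons1.
split; last by rewrite cons1_0; lra.
rewrite dist2_scale0 -/N; have := sqrt_sqrt N ltac:(lra).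
by move: (sqrt N) sN_gt0 => s s_gt0 <-; field; lra.
Qed.

End Dehomogenization.


Lemma cv_eq_const (u : nat -> R) c l : (forall k, u k = c) -> Un_cv u l -> l = c.
Proof.
move=> Hu Hl; apply: (UL_sequence _ _ _ Hl).
by apply: (@cv_ext (fun _ => c)); [move=> k; rewrite Hu | apply: cv_const].
Qed.

Lemma nonzero_coord (T : finType) (z : T -> R) : dist2 z (fun _ => 0) <> 0 -> exists j, z j <> 0.
Proof.
move=> Hz; apply: NNPP => Hn; apply: Hz; rewrite /dist2 big1 // => j _.
have -> : z j = 0 by apply: NNPP => Hj; apply: Hn; exists j.
ring.
Qed.

Program Definition mono0 n d : mono n d := exist _ [ffun _ => ord0] _.
Next Obligation. by rewrite big1 // => i _; rewrite ffunE. Qed.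

Program Definition mono_pow n d (j : 'I_n) : mono n d :=
  exist _ [ffun i => if i == j then ord_max else ord0] _.
Next Obligation.
by rewrite (bigD1 j) //= big1 ?ffunE ?eqxx ?addn0 // => i /negbTE Hi; rewrite ffunE Hi.
Qed.

Lemma deg_of_mono0 n d : deg_of (mono0 n d) = 0%N.
Proof. by rewrite /deg_of big1 // => i _; rewrite /= ffunE. Qed.

Lemma monomial_mono0 n d (x : 'I_n -> R) : monomial x (mono0 n d) = 1.
Proof. by rewrite /monomial big1 // => i _; rewrite /= ffunE. Qed.

Lemma deg_of_mono_pow n d (j : 'I_n) : deg_of (mono_pow d j) = d.
Proof.
rewrite /deg_of (bigD1 j) //= big1 ?ffunE ?eqxx ?addn0 // => i /negbTE Hi.
by rewrite ffunE Hi.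
Qed.

Lemma monomial_mono_pow n d (j : 'I_n) (x : 'I_n -> R) : monomial x (mono_pow d j) = x j ^ d.
Proof.
rewrite /monomial (bigD1 j) //= big1 ?ffunE ?eqxx /=; first ring.
by move=> i /negbTE Hi; rewrite ffunE Hi.
Qed.

Section HomogeneousMinimum.
Variables (n m t d : nat) (g : 'I_m -> rpoly n) (p : 'I_t -> rpoly n).

Lemma Khsphere_compact : compact_set (Khsphere g p).
Proof.
split; last by exists 1 => z [_ [-> _]]; lra.
move=> z /closureR_cv_seq [yk [Hyk Hy]].
have rp_hom_cv (q : rpoly n) : Un_cv (fun k => rp_hom q (yk k)) (rp_hom q z).
  exact: hom_eval_cv (cv_pw_const _) Hy.
split; [split => [i|j] | split].
- by apply: cv_eq_const (rp_hom_cv _) => k; case: (Hyk k) => [[Hg _] _].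
- apply/Rle_ge/(cv_ge0 _ (rp_hom_cv _)) => k.
  by case: (Hyk k) => [[_ Hp] _]; apply/Rge_le.
- by apply: cv_eq_const (cv_dist2 _ Hy) => k; case: (Hyk k) => [_ []].
- apply/Rle_ge/(cv_ge0 _ (Hy ord0)) => k.
  by case: (Hyk k) => [_ [_ /Rge_le]].
Qed.

Lemma Khsphere_nondegenerate z : Khsphere g p z ->
  exists a : mono n d, hom_eval d (coord_vec a) z <> 0.
Proof.
move=> [_ [z_unit _]]; have [j zj_neq0] : exists j, z j <> 0.
  by apply: nonzero_coord; rewrite z_unit; exact: R1_neq_R0.
case: (unliftP ord0 j) zj_neq0 => [i ->|->] zj_neq0.
- exists (mono_pow d i); rewrite hom_eval_coord_vec deg_of_mono_pow monomial_mono_pow subnn.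
  by rewrite Rmult_1_l; apply: pow_nonzero.
- exists (mono0 n d); rewrite hom_eval_coord_vec deg_of_mono0 monomial_mono0 subn0.
  by rewrite Rmult_1_r; apply: pow_nonzero.
Qed.

Lemma Pd_iff_Khsphere_nonneg (f : mono n d -> R) : closed_at_infty g p ->
  Pd g p f <-> forall z, Khsphere g p z -> 0 <= hom_eval d f z.
Proof.
move=> closed_infty; split=> [Pf z [Khz [_ z0_ge0]] | Hf x Kx].
- have /closureR_cv_seq [yk [Hyk Hy]] := (closed_infty z).1 (conj Khz z0_ge0).
  apply: (cv_ge0 _ (hom_eval_cv _ (cv_pw_const f) Hy)) => k.
  have [Khyk yk0_gt0] := Hyk k; rewrite hom_eval_dehom //.
  apply: Rmult_le_pos; first by apply: pow_le; lra.
  exact/Rge_le/Pf/Khset_dehom.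
- have [c [c_gt0 Sz]] := Khsphere_of_Kset Kx.
  have := Hf _ Sz; rewrite hom_eval_scale_cons1; have := pow_lt c d c_gt0.
  by move: (c ^ d) (peval f x) => u v *; apply: Rle_ge; nra.
Qed.

End HomogeneousMinimum.

Lemma Pd_iff_Kset_nonneg n m t d (g : 'I_m -> rpoly n) (p : 'I_t -> rpoly n)
    (f : mono n d -> R) :
  Pd g p f <-> forall x, Kset g p x -> 0 <= peval f x.
Proof. by split=> Hf x /Hf; [apply: Rge_le | apply: Rle_ge]. Qed.

Theorem mainTheorem12 (n m t d : nat) (g : 'I_m -> rpoly n) (p : 'I_t -> rpoly n) :
  (1 <= d)%N ->
  (exists x, Kset g p x) ->
  (compact_set (Kset g p) ->
     forall f : mono n d -> R,
       exists mn, is_min (Kset g p) (peval f) mn /\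
         ((mn > 0) <-> interiorR (Pd g p) f) /\
         (mn = 0 <-> boundaryR (Pd g p) f)) /\
  (closed_at_infty g p ->
     forall f : mono n d -> R,
       exists mn, is_min (Khsphere g p) (hom_eval d f) mn /\
         ((mn > 0) <-> interiorR (Pd g p) f) /\
         (mn = 0 <-> boundaryR (Pd g p) f)).
Proof.
(* The argument works for every degree, including d = 0. *)
move=> _ K_nonempty; split=> [K_compact | closed_infty] f.
- apply: min_characterization => //.
  + by move=> h hk z zk; apply: peval_cv.
  + exact: peval_linear.
  + move=> x _; exists (mono0 n d).
    by rewrite peval_coord_vec monomial_mono0; exact: R1_neq_R0.
  + exact: Pd_iff_Kset_nonneg.
- have [x Kx] := K_nonempty; have [c [_ Sz]] := Khsphere_of_Kset Kx.
  apply: min_characterization.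
  + exact: Khsphere_compact.
  + by exists (fun j => c * cons1 x j).
  + by move=> h hk z zk; apply: hom_eval_cv.
  + exact: hom_eval_linear.
  + exact: Khsphere_nondegenerate.
  + by move=> h; apply: Pd_iff_Khsphere_nonneg.
Qed.
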